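(* Let $n\ge3$, $l\ge1$, $\mathfrak g=B^{(1)}_n$, $B$ the level-$l$ perfect crystal of the context, $\lambda=l\Lambda_0$, $d=2n-1$, and $i^{(j)}_1=i^{(j)}_{2n-1}=\epsilon(j+1)$, $i^{(j)}_a=i^{(j)}_{2n-a}=a$ for $2\le a\le n$. Then: (II) $B^{(j)}_d=B$ for all $j\ge1$; (III) $\langle\lambda_j,h_{i^{(j)}_a}\rangle\le\varepsilon_{i^{(j)}_a}(b)$ for all $j\ge1$, $1\le a\le d$, $b\in B^{(j)}_{a-1}$; (IV') for all $j\ge1$, $a=1,\dots,d$: $\varepsilon_{i^{(j)}_{a+1}}(b^{(j)}_a)=0$, $\varphi_{i^{(j)}_{a+1}}(b^{(j)}_a)>0$ (with $i^{(j)}_{d+1}:=i^{(j+1)}_1$), and $b^{(j+1)}_0=\tilde f_{i^{(j+1)}_1}^mb^{(j)}_d$ with $m=\langle\lambda_{j+1},h_{i^{(j+1)}_1}\rangle$. Moreover $B^{(j)}_0=\{(0,\dots,0,l)\}$ ($j$ odd), $\{(l,0,\dots,0)\}$ ($j$ even), $B^{(j)}_{2n-1}=B$, and for $1\le a\le n-1$: $B^{(j)}_a$ is the set of $b\in B$ whose coordinates are all $0$ except possibly $x_2,\dots,x_{a+1},\bar x_1$ ($j$ odd), resp. except possibly $x_1,\dots,x_{a+1}$ ($j$ even); $B^{(j)}_{n+a-1}$ is the set of $b\in B$ whose coordinates are all $0$ except possibly $x_2,\dots,x_n,x_0,\bar x_n,\dots,\bar x_{n-a+1},\bar x_1$ ($j$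 odd), resp. except possibly $x_1,\dots,x_n,x_0,\bar x_n,\dots,\bar x_{n-a+1}$ ($j$ even). Also $b^{(j)}_0=(0,\dots,0,l)$ ($j$ odd), $(l,0,\dots,0)$ ($j$ even); $b^{(j)}_{2n-1}=(l,0,\dots,0)$ ($j$ odd), $(0,\dots,0,l)$ ($j$ even); and for $1\le a\le n-1$, $b^{(j)}_a$ has $x_{a+1}=l$ and all other coordinates $0$, and $b^{(j)}_{n+a-1}$ has $\bar x_{n-a+1}=l$ and all other coordinates $0$.
   Context: $\epsilon(i)=0$ for $i$ even and $1$ for $i$ odd; $(x)_+=\max(x,0)$. $B=\{(x_1,\dots,x_n,x_0,\bar x_n,\dots,\bar x_1)\in\mathbb Z^{2n}\times\{0,1\}: x_i,\bar x_i\ge0,\ \sum_{i=1}^n(x_i+\bar x_i)=l\}$ (coordinates written in this order). Crystal structure: $\tilde f_0b=(x_1,x_2+1,\dots,\bar x_2,\bar x_1-1)$ if $x_2\ge\bar x_2$, $(x_1+1,x_2,\dots,\bar x_2-1,\bar x_1)$ if $x_2<\bar x_2$; for $1\le i\le n-1$, $\tilde f_ib$ replaces $(x_i,x_{i+1})$ by $(x_i-1,x_{i+1}+1)$ if $x_{i+1}\ge\bar x_{i+1}$, and $(\bar x_{i+1},\bar x_i)$ by $(\bar x_{i+1}-1,\bar x_i+1)$ if $x_{i+1}<\bar x_{i+1}$; $\tilde f_nb$ replaces $(x_n,x_0)$ by $(x_n-1,x_0+1)$ if $x_0=0$ and $(x_0,\bar x_n)$ by $(x_0-1,\bar x_n+1)$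 if $x_0=1$; $\tilde e_ib=b'$ iff $\tilde f_ib'=b$, and $\tilde f_ib=0$ if the result is not in $B$. $\varphi_0(b)=\bar x_1+(\bar x_2-x_2)_+$, $\varepsilon_0(b)=x_1+(x_2-\bar x_2)_+$; $\varphi_i(b)=x_i+(\bar x_{i+1}-x_{i+1})_+$, $\varepsilon_i(b)=\bar x_i+(x_{i+1}-\bar x_{i+1})_+$ ($1\le i\le n-1$); $\varphi_n(b)=2x_n+x_0$, $\varepsilon_n(b)=2\bar x_n+x_0$. For $\lambda=l\Lambda_0$: $\lambda_j=l\Lambda_{\epsilon(j)}$ and the ground state elements are $\overline b_j=(0,\dots,0,l)$ for $j$ odd, $(l,0,\dots,0)$ for $j$ even; $\langle\lambda_j,h_i\rangle$ is the coefficient of $\Lambda_i$ in $\lambda_j$. Given $d$, $i^{(j)}_a$: $B^{(j)}_0=\{\overline b_j\}$, $B^{(j)}_a=\bigcup_{n\ge0}\tilde f_{i^{(j)}_a}^nB^{(j)}_{a-1}\setminus\{0\}$; $b^{(j)}_0=\overline b_j$, $b^{(j)}_a=\tilde f_{i^{(j)}_a}^{\varphi_{i^{(j)}_a}(b^{(j)}_{a-1})}b^{(j)}_{a-1}$. *)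

From mathcomp Require Import all_boot.
Set Implicit Arguments. Unset Strict Implicit. Unset Printing Implicit Defensive.

(* An element b of the crystal B (for B^(1)_n, level l) is encoded as a
   sequence of 2n+1 naturals, in the order
     x_1, ..., x_n, x_0, xbar_n, ..., xbar_1
   i.e. x_i is at position i-1, x_0 at position n, xbar_i at position 2n+1-i.
   The crystal "0" is encoded by [None]. *)

Definition posx (i : nat) : nat := i.-1.
Definition posx0 (n : nat) : nat := n.
Definition posxb (n i : nat) : nat := (2 * n).+1 - i.

Definition cx (b : seq nat) (i : nat) : nat := nth 0 b (posx i).
Definition cx0 (n : nat) (b : seq nat) : nat := nth 0 b (posx0 n).
Definition cxb (n : nat) (b : seq nat) (i : nat) : nat := nth 0 b (posxb n i).

Definition inB (n l : nat) (b : seq nat) : bool :=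
  [&& size b == (2 * n).+1, cx0 n b <= 1 & sumn b == l].

Definition move (b : seq nat) (p q : nat) : option (seq nat) :=
  if nth 0 b p is k.+1 then
    Some (set_nth 0 (set_nth 0 b p k) q (nth 0 b q).+1)
  else None.

Definition fraw (n i : nat) (b : seq nat) : option (seq nat) :=
  if i == 0 then
    (if cxb n b 2 <= cx b 2 then move b (posxb n 1) (posx 2)
     else move b (posxb n 2) (posx 1))
  else if i < n then
    (if cxb n b i.+1 <= cx b i.+1 then move b (posx i) (posx i.+1)
     else move b (posxb n i.+1) (posxb n i))
  else if i == n then
    (if cx0 n b == 0 then move b (posx n) (posx0 n)
     else move b (posx0 n) (posxb n n))
  else None.

Definition ftil (n l i : nat) (b : seq nat) : option (seq nat) :=
  match fraw n i b with
  | Some r => if inB n l r then Some r else None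
  | None => None
  end.

Definition ftil_iter (n l i k : nat) (ob : option (seq nat)) : option (seq nat) :=
  iter k (fun o => obind (ftil n l i) o) ob.

(* varphi_i and varepsilon_i ; (x)_+ is truncated subtraction on nat *)
Definition phi (n i : nat) (b : seq nat) : nat :=
  if i == 0 then cxb n b 1 + (cxb n b 2 - cx b 2)
  else if i < n then cx b i + (cxb n b i.+1 - cx b i.+1)
  else 2 * cx b n + cx0 n b.

Definition eps (n i : nat) (b : seq nat) : nat :=
  if i == 0 then cx b 1 + (cx b 2 - cxb n b 2)
  else if i < n then cxb n b i + (cx b i.+1 - cxb n b i.+1)
  else 2 * cxb n b n + cx0 n b.

Definition epsj (j : nat) : nat := odd j.

(* <lambda_j, h_i> where lambda_j = l Lambda_{epsilon(j)} *)
Definition lam (l j i : nat) : nat := if i == epsj j then l else 0.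

Definition ground (n l j : nat) : seq nat :=
  if odd j then rcons (nseq (2 * n) 0) l else l :: nseq (2 * n) 0.

Definition idx (n j a : nat) : nat :=
  if (a == 1) || (a == (2 * n).-1) then epsj j.+1
  else if a <= n then a else 2 * n - a.

Fixpoint Bset (n l j a : nat) : seq nat -> Prop :=
  match a with
  | 0 => fun c => c = ground n l j
  | a'.+1 => fun c => exists b k,
      Bset n l j a' b /\ ftil_iter n l (idx n j a) k (Some b) = Some c
  end.

Fixpoint bpt (n l j a : nat) : option (seq nat) :=
  match a with
  | 0 => Some (ground n l j)
  | a'.+1 => obind (fun b => ftil_iter n l (idx n j a) (phi n (idx n j a) b) (Some b))
                   (bpt n l j a')
  end.

Definition single (n l p : nat) : seq nat := set_nth 0 (nseq (2 * n).+1 0) p l.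

Definition supp_in (b : seq nat) (P : pred nat) : Prop :=
  forall p, p < size b -> ~~ P p -> nth 0 b p = 0.

Definition allowedA (n j a : nat) : pred nat := fun p =>
  if odd j then has (fun i => p == posx i) (iota 2 a) || (p == posxb n 1)
  else has (fun i => p == posx i) (iota 1 a.+1).

Definition allowedB (n j a : nat) : pred nat := fun p =>
  if odd j then
    [|| has (fun i => p == posx i) (iota 2 n.-1), p == posx0 n,
        has (fun i => p == posxb n i) (iota (n - a).+1 a) | p == posxb n 1]
  else
    [|| has (fun i => p == posx i) (iota 1 n), p == posx0 n |
        has (fun i => p == posxb n i) (iota (n - a).+1 a)].

(* For i < n the operator f~_i only touches the four coordinates x_i, x_{i+1},
   xbar_{i+1}, xbar_i (xbar_1, x_2, xbar_2, x_1 for i = 0), on which it acts as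
   on a tensor product of two sl_2-strings, and f~_n only touches x_n, x_0,
   xbar_n.  Hence every B^(j)_a is the set of elements of B supported on an
   explicit set of coordinates, which grows at each step a -> a+1: the new set
   is closed under f~_(i_(a+1)), and conversely every element supported on it
   is reached from the head of its i_(a+1)-string, which is supported on the
   old set.  Along the way b^(j)_a is the element with a single nonzero
   coordinate l, travelling from xbar_1 (resp. x_1) through x_2, ..., x_n,
   xbar_n, ..., xbar_2 to x_1 (resp. xbar_1); at every step it sits at a
   source coordinate of the next operator, which gives (IV').  (III) holds
   because lambda_j vanishes on every h_(i_a). *)

From mathcomp Require Import all_boot zify.
Set Implicit Arguments. Unset Strict Implicit.


Lemma sumn_set_nthD (s : seq nat) p v : p < size s ->
  sumn (set_nth 0 s p v) + nth 0 s p = sumn s + v.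
Proof.
elim: s p => [|x s IHs] [|p] //= hp; first lia.
have := IHs p hp; lia.
Qed.

Lemma nth_single n l p m : nth 0 (single n l p) m = if m == p then l else 0.
Proof. by rewrite /single nth_set_nth /= -[0 :: _]/(nseq _.+1 0) nth_nseq if_same. Qed.

Lemma size_single n l p : p <= 2 * n -> size (single n l p) = (2 * n).+1.
Proof. by move=> hp; rewrite size_set_nth size_nseq; apply/maxn_idPr. Qed.

Lemma sumn_single n l p : sumn (single n l p) = l.
Proof. by rewrite /single sumn_set_nth0 sumn_nseq nth_nseq if_same mul0n subn0. Qed.

Lemma inB_single n l p : p <= 2 * n -> p != n -> inB n l (single n l p).
Proof.
move=> hp hpn; rewrite /inB size_single // /cx0 /posx0 nth_single eq_sym (negbTE hpn).
by rewrite sumn_single !eqxx.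
Qed.

Definition transfer (b : seq nat) (p q k : nat) : seq nat :=
  set_nth 0 (set_nth 0 b p (nth 0 b p - k)) q (nth 0 b q + k).

Lemma move_transfer b p q :
  move b p q = if 0 < nth 0 b p then Some (transfer b p q 1) else None.
Proof. by rewrite /move /transfer; case: (nth 0 b p) => [|k] //=; rewrite subn1 addn1. Qed.

Lemma size_transfer b p q k : p < size b -> q < size b -> size (transfer b p q k) = size b.
Proof. by move=> hp hq; rewrite !size_set_nth; lia. Qed.

Lemma nth_transfer b p q k m : nth 0 (transfer b p q k) m =
  if m == q then nth 0 b q + k else if m == p then nth 0 b p - k else nth 0 b m.
Proof. by rewrite /transfer nth_set_nth /= nth_set_nth. Qed.

(* [nth_lia] decides goals on coordinates of [transfer]/[single] terms by case
   analysis on index equalities; disequality hypotheses are used to prune the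
   cases and then cleared, as they make [lia] exponentially slower. *)
Ltac case_eqn := let e := fresh "e" in case: eqP => [e|?]; [try rewrite e; move: e => ? |].
Ltac neq_rewrite := repeat match goal with
  | H : is_true (?x != ?y) |- context [?x == ?y] => rewrite (negbTE H)
  | H : is_true (?x != ?y) |- context [?y == ?x] => rewrite (eq_sym y x) (negbTE H)
  end.
Ltac simpl_eqn := rewrite ?eqxx; neq_rewrite; cbv beta iota.
Ltac clear_neq := repeat match goal with H : is_true (_ != _) |- _ => clear H end.
Ltac nth_lia := rewrite ?nth_transfer ?nth_single; simpl_eqn;
  repeat (case_eqn; simpl_eqn); first [clear_neq; lia | lia].

Lemma sumn_transfer b p q k : p != q -> p < size b -> q < size b -> k <= nth 0 b p ->
  sumn (transfer b p q k) = sumn b.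
Proof.
move=> pq hp hq hk.
have := sumn_set_nthD (nth 0 b p - k) hp.
have := @sumn_set_nthD (set_nth 0 b p (nth 0 b p - k)) q (nth 0 b q + k).
rewrite size_set_nth nth_set_nth /= eq_sym (negbTE pq) /transfer; lia.
Qed.

Lemma inB_transfer n l b p q k : inB n l b -> p != q -> p <= 2 * n -> q <= 2 * n ->
  k <= nth 0 b p -> nth 0 (transfer b p q k) n <= 1 -> inB n l (transfer b p q k).
Proof.
case/and3P => /eqP hs _ /eqP hsum pq hp hq hk hx0.
rewrite /inB size_transfer hs ?eqxx /cx0 /posx0 ?hx0 ?sumn_transfer ?hs ?hsum ?eqxx //; lia.
Qed.

Lemma transfer0 b p q : p < size b -> q < size b -> transfer b p q 0 = b.
Proof.
by move=> hp hq; apply: (@eq_from_nth _ 0) => [|m _]; [rewrite size_transfer | nth_lia].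
Qed.

Lemma transfer_succ b p q k : p != q -> p < size b -> q < size b -> k < nth 0 b p ->
  transfer (transfer b p q k) p q 1 = transfer b p q k.+1.
Proof.
move=> pq hp hq hk; apply: (@eq_from_nth _ 0) => [|m _]; last by nth_lia.
by rewrite !size_transfer ?size_transfer.
Qed.

Lemma transfer_single n l p q : p != q -> p <= 2 * n -> q <= 2 * n ->
  transfer (single n l p) p q l = single n l q.
Proof.
move=> pq hp hq; apply: (@eq_from_nth _ 0) => [|m _]; last by nth_lia.
by rewrite size_transfer !size_single.
Qed.

Lemma inB_size n l c : inB n l c -> size c = (2 * n).+1.
Proof. by case/and3P => /eqP. Qed.

Lemma inB_x0 n l c : inB n l c -> nth 0 c n <= 1.
Proof. by case/and3P. Qed.

Lemma ftil_iterS n l i k ob :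
  ftil_iter n l i k.+1 ob = obind (ftil n l i) (ftil_iter n l i k ob).
Proof. by []. Qed.

Lemma ftil_iterD n l i k1 k2 ob :
  ftil_iter n l i (k1 + k2) ob = ftil_iter n l i k2 (ftil_iter n l i k1 ob).
Proof. by rewrite /ftil_iter addnC iterD. Qed.

Definition src1 (n i : nat) : nat := if i == 0 then posxb n 1 else posx i.
Definition tgt1 (n i : nat) : nat := if i == 0 then posx 2 else posx i.+1.
Definition src2 (n i : nat) : nat := if i == 0 then posxb n 2 else posxb n i.+1.
Definition tgt2 (n i : nat) : nat := if i == 0 then posx 1 else posxb n i.

Definition sites_ok (n P Q R S : nat) : Prop :=
  [/\ [/\ P != Q, P != R, P != S, Q != R & Q != S], R != S,
      [/\ P != n, Q != n, R != n & S != n] &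
      [/\ P <= 2 * n, Q <= 2 * n, R <= 2 * n & S <= 2 * n]].

Lemma sites_ok_lt n i : 3 <= n -> i < n ->
  sites_ok n (src1 n i) (tgt1 n i) (src2 n i) (tgt2 n i).
Proof.
move=> hn; rewrite /sites_ok /src1 /tgt1 /src2 /tgt2 /posx /posxb.
by case: i => [|i] hi /=; split; try split; lia.
Qed.

Lemma fraw_lt n i b : i < n -> fraw n i b =
  if nth 0 b (src2 n i) <= nth 0 b (tgt1 n i) then move b (src1 n i) (tgt1 n i)
  else move b (src2 n i) (tgt2 n i).
Proof. by move=> hi; rewrite /fraw /src1 /tgt1 /src2 /tgt2 /cx /cxb hi; case: ifP. Qed.

Lemma phi_lt n i b : i < n ->
  phi n i b = nth 0 b (src1 n i) + (nth 0 b (src2 n i) - nth 0 b (tgt1 n i)).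
Proof. by move=> hi; rewrite /phi /src1 /tgt1 /src2 /cx /cxb hi; case: ifP. Qed.

Lemma eps_lt n i b : i < n ->
  eps n i b = nth 0 b (tgt2 n i) + (nth 0 b (tgt1 n i) - nth 0 b (src2 n i)).
Proof. by move=> hi; rewrite /eps /tgt2 /tgt1 /src2 /cx /cxb hi; case: ifP. Qed.

Lemma ftil_lt n l i c : 3 <= n -> i < n -> inB n l c -> ftil n l i c =
  if nth 0 c (src2 n i) <= nth 0 c (tgt1 n i) then move c (src1 n i) (tgt1 n i)
  else move c (src2 n i) (tgt2 n i).
Proof.
move=> hn hi hc; have [[? ? ? ? ?] ? [? ? ? ?] [? ? ? ?]] := sites_ok_lt hn hi.
have hx0 := inB_x0 hc.
rewrite /ftil fraw_lt // !move_transfer.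
by case: ifP => _; case: ifP => // hp; rewrite inB_transfer //; first [lia | nth_lia].
Qed.

Lemma supp_in_nth c (A : pred nat) p : supp_in c A -> ~~ A p -> nth 0 c p = 0.
Proof. by move=> hc hp; case: (ltnP p (size c)) => [/hc -> // | /(nth_default 0)]. Qed.

Lemma supp_transfer c (A : pred nat) p q k : supp_in c A -> A q ->
  p < size c -> q < size c -> supp_in (transfer c p q k) A.
Proof.
move=> hc hq hp hq' m; rewrite size_transfer // => hm hAm; rewrite nth_transfer.
case: eqP => [e|_]; first by move: hAm; rewrite e hq.
by case: eqP => [e|_]; rewrite -?e (supp_in_nth hc hAm).
Qed.

Lemma ftil_inB n l i c c' : ftil n l i c = Some c' -> inB n l c'.
Proof. by rewrite /ftil; case: fraw => // r; case: ifP => // hr [<-]. Qed.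

Section Strings.
Variables (n l i P Q R S : nat).
Hypothesis sites : sites_ok n P Q R S.
Hypothesis ftil_sites : forall c, inB n l c ->
  ftil n l i c = if nth 0 c R <= nth 0 c Q then move c P Q else move c R S.

Local Ltac sites_facts := case: (sites) => [[? ? ? ? ?] ? [? ? ? ?] [? ? ? ?]].

Lemma ftil_iter_src1 b k : inB n l b -> nth 0 b R <= nth 0 b Q -> k <= nth 0 b P ->
  ftil_iter n l i k (Some b) = Some (transfer b P Q k).
Proof.
sites_facts; move=> hb hRQ; have hs := inB_size hb; have hx0 := inB_x0 hb.
elim: k => [|k IHk] hk; first by rewrite transfer0 ?hs //; lia.
have hbk : inB n l (transfer b P Q k) by apply: inB_transfer => //; first [lia | nth_lia].
rewrite ftil_iterS IHk /=; last lia.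
rewrite ftil_sites // ifT; last by nth_lia.
by rewrite move_transfer ifT ?transfer_succ ?hs //; lia || nth_lia.
Qed.

Lemma ftil_iter_src2 b k : inB n l b -> nth 0 b Q + k <= nth 0 b R ->
  ftil_iter n l i k (Some b) = Some (transfer b R S k).
Proof.
sites_facts; move=> hb; have hs := inB_size hb; have hx0 := inB_x0 hb.
elim: k => [|k IHk] hk; first by rewrite transfer0 ?hs //; lia.
have hbk : inB n l (transfer b R S k) by apply: inB_transfer => //; first [lia | nth_lia].
rewrite ftil_iterS IHk /=; last lia.
rewrite ftil_sites // ifF; last by apply/negbTE; rewrite -ltnNge; nth_lia.
by rewrite move_transfer ifT ?transfer_succ ?hs //; lia || nth_lia.
Qed.

(* The head e~_i^max c of the i-string through c. *)
Definition emax (c : seq nat) : seq nat :=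
  transfer (transfer c S R (nth 0 c S)) Q P (nth 0 c Q - nth 0 c R).

Lemma inB_emax c : inB n l c -> inB n l (emax c).
Proof.
sites_facts; move=> hc; have hx0 := inB_x0 hc.
by apply: inB_transfer; first apply: inB_transfer => //; first [lia | nth_lia].
Qed.

Lemma ftil_iter_emax c : inB n l c ->
  ftil_iter n l i (nth 0 c S + (nth 0 c Q - nth 0 c R)) (Some (emax c)) = Some c.
Proof.
sites_facts; move=> hc; have hs := inB_size hc; have hx0 := inB_x0 hc.
have he := inB_emax hc.
rewrite ftil_iterD ftil_iter_src2 //; last by rewrite /emax; nth_lia.
set b := transfer (emax c) R S (nth 0 c S).
have hb : inB n l b by apply: inB_transfer => //; first [lia | rewrite /emax; nth_lia].
have -> : ftil_iter n l i (nth 0 c Q - nth 0 c R) (Some b) =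
          Some (transfer b P Q (nth 0 c Q - nth 0 c R)).
  case: (leqP (nth 0 c Q) (nth 0 c R)) => hQR.
    by rewrite (_ : _ - _ = 0) ?transfer0 ?(inB_size hb) //; lia.
  by apply: ftil_iter_src1 => //; rewrite /b /emax; nth_lia.
congr Some; apply: (@eq_from_nth _ 0) => [|m _].
  by rewrite !size_transfer ?(inB_size he) ?hs //; lia.
by rewrite /b /emax; nth_lia.
Qed.

Lemma ftil_supp (A : pred nat) c c' : (A P -> A Q) -> (A R -> A S) ->
  inB n l c -> supp_in c A -> ftil n l i c = Some c' -> supp_in c' A.
Proof.
sites_facts; move=> hPQ hRS hc hcA; have hs := inB_size hc.
rewrite ftil_sites // !move_transfer.
case: ifP => _; case: ifP => // hpos [<-]; apply: supp_transfer; rewrite ?hs //; try lia.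
- by apply: hPQ; apply: contraLR hpos => /(supp_in_nth hcA) ->.
- by apply: hRS; apply: contraLR hpos => /(supp_in_nth hcA) ->.
Qed.

Lemma emax_supp (A A' : pred nat) c : A P ->
  (A' R -> A R) -> (A' S -> A R) -> (A' Q -> A' R -> A Q) ->
  (forall m, m <= 2 * n -> m \notin [:: P; Q; R; S] -> A' m -> A m) ->
  size c = (2 * n).+1 -> supp_in c A' -> supp_in (emax c) A.
Proof.
sites_facts; move=> hP hR hS hQ hm hs hc m hm_size hAm.
have hmn : m <= 2 * n by move: hm_size; rewrite !size_transfer ?size_transfer ?hs; lia.
have hc0 p : ~~ A' p -> nth 0 c p = 0 := supp_in_nth hc.
rewrite /emax.
case: (m =P P) => [e|nP]; first by move: hAm; rewrite e hP.
case: (m =P Q) => [e|nQ].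
  have zQR : nth 0 c Q = 0 \/ nth 0 c R = 0.
    case: (boolP (A' Q)) => [hQ'|/hc0]; last by left.
    by right; apply: hc0; apply: contra hAm => hR'; rewrite e; apply: hQ.
  by rewrite e; case: zQR => ?; nth_lia.
case: (m =P R) => [e|nR].
  have /hc0 : ~~ A' R by apply: contra hAm; rewrite e; apply: hR.
  have /hc0 : ~~ A' S by apply: contra hAm; rewrite e; apply: hS.
  by rewrite e; nth_lia.
case: (m =P S) => [e|nS]; first by rewrite e; nth_lia.
have /hc0 : ~~ A' m.
  apply: contra hAm; apply: hm => //.
  by rewrite !inE (introF eqP nP) (introF eqP nQ) (introF eqP nR) (introF eqP nS).
by nth_lia.
Qed.

End Strings.

Section StringN.
Variables (n l : nat).
Hypothesis hn : 3 <= n.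

Local Ltac sites_facts :=
  have ? : n.-1 != n by lia; have ? : n.-1 != n.+1 by lia; have ? : n != n.+1 by lia.

Lemma ftil_n c : inB n l c ->
  ftil n l n c = if nth 0 c n == 0 then move c n.-1 n else move c n n.+1.
Proof.
sites_facts; move=> hc; have hx0 := inB_x0 hc.
rewrite /ftil /fraw ifF ?ltnn ?eqxx; last lia.
rewrite /cx0 /posx0 /posx (_ : posxb n n = n.+1); last by rewrite /posxb; lia.
rewrite !move_transfer.
by case: ifP => hz; case: ifP => // hp; rewrite inB_transfer //; first [lia | nth_lia].
Qed.

Lemma ftil_iter_n b m : inB n l b -> nth 0 b n = 0 -> m <= nth 0 b n.-1 ->
  ftil_iter n l n (2 * m) (Some b) = Some (transfer b n.-1 n.+1 m).
Proof.
sites_facts; move=> hb hz; have hs := inB_size hb; have hx0 := inB_x0 hb.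
elim: m => [|m IHm] hm; first by rewrite transfer0 ?hs //; lia.
have hb1 : inB n l (transfer b n.-1 n.+1 m).
  by apply: inB_transfer => //; first [lia | nth_lia].
set b2 := transfer (transfer b n.-1 n.+1 m) n.-1 n 1.
have hb2 : inB n l b2 by apply: inB_transfer => //; first [lia | nth_lia].
rewrite mulnS !ftil_iterS IHm /=; last lia.
rewrite ftil_n // ifT; last by apply/eqP; nth_lia.
rewrite move_transfer ifT /=; last by nth_lia.
rewrite ftil_n // ifF; last by rewrite /b2; nth_lia.
rewrite move_transfer ifT; last by rewrite /b2; nth_lia.
congr Some; apply: (@eq_from_nth _ 0) => [|k _].
  by rewrite /b2 !size_transfer ?size_transfer ?hs //; lia.
by rewrite /b2; nth_lia.
Qed.

Definition emaxN (c : seq nat) : seq nat :=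
  transfer (transfer c n n.-1 (nth 0 c n)) n.+1 n.-1 (nth 0 c n.+1).

Lemma inB_emaxN c : inB n l c -> inB n l (emaxN c).
Proof.
sites_facts; move=> hc; have hx0 := inB_x0 hc.
by apply: inB_transfer; first apply: inB_transfer => //; first [lia | nth_lia].
Qed.

Lemma ftil_iter_emaxN c : inB n l c ->
  ftil_iter n l n (2 * nth 0 c n.+1 + nth 0 c n) (Some (emaxN c)) = Some c.
Proof.
sites_facts; move=> hc; have hs := inB_size hc; have hx0 := inB_x0 hc.
have he := inB_emaxN hc; have hse := inB_size he.
rewrite ftil_iterD ftil_iter_n //; try by rewrite /emaxN; nth_lia.
set b := transfer (emaxN c) n.-1 n.+1 (nth 0 c n.+1).
have hb : inB n l b by apply: inB_transfer => //; first [lia | rewrite /emaxN; nth_lia].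
have hsb := inB_size hb.
have [hc0|hc1] : nth 0 c n = 0 \/ nth 0 c n = 1 by lia.
  rewrite hc0 /=; congr Some; apply: (@eq_from_nth _ 0) => [|m _]; first by rewrite hsb.
  by rewrite /b /emaxN; nth_lia.
rewrite hc1 /= ftil_n // ifT; last by apply/eqP; rewrite /b /emaxN; nth_lia.
rewrite move_transfer ifT; last by rewrite /b /emaxN; nth_lia.
congr Some; apply: (@eq_from_nth _ 0) => [|m _].
  by rewrite size_transfer hsb ?hs //; lia.
by rewrite /b /emaxN; nth_lia.
Qed.

Lemma ftil_n_supp (A : pred nat) c c' : A n -> A n.+1 ->
  inB n l c -> supp_in c A -> ftil n l n c = Some c' -> supp_in c' A.
Proof.
move=> hAn hAn1 hc hcA; have hs := inB_size hc.
rewrite ftil_n // !move_transfer.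
by case: ifP => _; case: ifP => // _ [<-]; apply: supp_transfer; rewrite ?hs //; lia.
Qed.

Lemma emaxN_supp (A A' : pred nat) c : A n.-1 ->
  (forall m, m <= 2 * n -> m \notin [:: n.-1; n; n.+1] -> A' m -> A m) ->
  size c = (2 * n).+1 -> supp_in c A' -> supp_in (emaxN c) A.
Proof.
sites_facts; move=> hAn hm hs hc m hm_size hAm.
have hmn : m <= 2 * n by move: hm_size; rewrite !size_transfer ?size_transfer ?hs; lia.
have hc0 p : ~~ A' p -> nth 0 c p = 0 := supp_in_nth hc.
case: (m =P n.-1) => [e|n1]; first by move: hAm; rewrite e hAn.
case: (m =P n) => [->|n2]; first by rewrite /emaxN; nth_lia.
case: (m =P n.+1) => [->|n3]; first by rewrite /emaxN; nth_lia.
have /hc0 : ~~ A' m.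
  apply: contra hAm; apply: hm => //.
  by rewrite !inE (introF eqP n1) (introF eqP n2) (introF eqP n3).
by rewrite /emaxN; nth_lia.
Qed.

End StringN.

Lemma Bset_succ n l j a (A A' : pred nat) :
  (forall c, Bset n l j a c <-> inB n l c /\ supp_in c A) ->
  (forall p, A p -> A' p) ->
  (forall c c', inB n l c -> supp_in c A' ->
     ftil n l (idx n j a.+1) c = Some c' -> supp_in c' A') ->
  (forall c, inB n l c -> supp_in c A' -> exists b k,
     [/\ inB n l b, supp_in b A & ftil_iter n l (idx n j a.+1) k (Some b) = Some c]) ->
  forall c, Bset n l j a.+1 c <-> inB n l c /\ supp_in c A'.
Proof.
move=> IH hAA' hclosed hhead c /=; split.
- case=> b [k [/IH [hb hbA] hk]].
  have hbA' : supp_in b A'.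
    by move=> m hm hA'm; apply: hbA => //; apply: contra hA'm; apply: hAA'.
  elim: k c hk => [|k IHk] c; first by case=> <-.
  rewrite ftil_iterS; case E: ftil_iter => [c0|] //= hc.
  have [hc0 hc0A] := IHk c0 E.
  by split; [apply: ftil_inB hc | apply: hclosed hc].
- case=> hc hcA; have [b [k [hb hbA hk]]] := hhead c hc hcA.
  by exists b, k; split => //; apply/IH.
Qed.

(* A' is f~_i-closed and the string heads of the A'-supported elements are
   A-supported: A' is the support of the f~_i-strings starting in A. *)
Definition string_hull (n : nat) (A A' : pred nat) (P Q R S : nat) : Prop :=
  [/\ forall p, A p -> A' p, (A' P -> A' Q) /\ (A' R -> A' S),
      A P /\ (A' Q -> A' R -> A Q), (A' R -> A R) /\ (A' S -> A R) &
      forall m, m <= 2 * n -> m \notin [:: P; Q; R; S] -> A' m -> A m].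

Lemma Bset_succ_lt n l j a i (A A' : pred nat) : 3 <= n -> idx n j a.+1 = i -> i < n ->
  string_hull n A A' (src1 n i) (tgt1 n i) (src2 n i) (tgt2 n i) ->
  (forall c, Bset n l j a c <-> inB n l c /\ supp_in c A) ->
  forall c, Bset n l j a.+1 c <-> inB n l c /\ supp_in c A'.
Proof.
move=> hn hidx hi [hAA' [hPQ hRS] [hP hQ] [hR hS] hm] IH.
have hs := sites_ok_lt hn hi; have hf := fun c => @ftil_lt n l _ c hn hi.
apply: Bset_succ IH hAA' _ _ => [c c' hc hcA|c hc hcA]; rewrite hidx.
  exact: (ftil_supp hs hf (A := A') hPQ hRS hc hcA).
do 2 eexists; split; last exact: (ftil_iter_emax hs hf hc).
  exact: (inB_emax hs hc).
exact: (emax_supp hs (A := A) hP hR hS hQ hm (inB_size hc) hcA).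
Qed.

Definition string_hullN (n : nat) (A A' : pred nat) : Prop :=
  [/\ forall p, A p -> A' p, A' n /\ A' n.+1, A n.-1 &
      forall m, m <= 2 * n -> m \notin [:: n.-1; n; n.+1] -> A' m -> A m].

Lemma Bset_succ_n n l j a (A A' : pred nat) : 3 <= n -> idx n j a.+1 = n ->
  string_hullN n A A' ->
  (forall c, Bset n l j a c <-> inB n l c /\ supp_in c A) ->
  forall c, Bset n l j a.+1 c <-> inB n l c /\ supp_in c A'.
Proof.
move=> hn hi [hAA' [hn0 hn1] hn' hm] IH.
apply: Bset_succ IH hAA' _ _ => [c c' hc hcA|c hc hcA]; rewrite hi.
  exact: (ftil_n_supp hn (A := A') hn0 hn1 hc hcA).
do 2 eexists; split; last exact: (ftil_iter_emaxN hn hc).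
  exact: (inB_emaxN hn hc).
exact: (emaxN_supp hn (A := A) hn' hm (inB_size hc) hcA).
Qed.

(* The admissible support of B^(j)_a, uniformly in a (cf. [allowedA] and
   [allowedB]), and the position of the nonzero coordinate of b^(j)_a; from
   a = n on both have passed position n (x_0), hence the shift (n <= a). *)
Definition Bset_supp (n j a : nat) : pred nat := fun p =>
  [|| a == (2 * n).-1, odd j && ((0 < p <= a + (n <= a)) || (p == 2 * n))
    | ~~ odd j && (p <= a + (n <= a))].

Definition bpt_pos (n j a : nat) : nat :=
  if a == 0 then (if odd j then 2 * n else 0)
  else if a == (2 * n).-1 then (if odd j then 0 else 2 * n) else a + (n <= a).

Lemma idx_succ n j a : 3 <= n -> a < (2 * n).-1 -> let i := idx n j a.+1 in
  [/\ (a == 0) || (a == (2 * n).-2) -> i = ~~ odd j, 0 < a < n.-1 -> i = a.+1,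
      a = n.-1 -> i = n & n <= a < (2 * n).-2 -> i = 2 * n - a.+1].
Proof. by move=> hn ha; rewrite /idx /epsj /=; split => h; repeat case: ifP => ?; lia. Qed.

Ltac decide_bool b :=
  first [rewrite (_ : b = true); last by lia | rewrite (_ : b = false); last by lia].
Ltac decide_bools := repeat match goal with
  | |- context [nat_of_bool ?b] => decide_bool b
  | |- context [if ?b then _ else _] => decide_bool b
  | |- context [?x == ?y] => decide_bool (x == y)
  end.
Ltac hull_lia :=
  rewrite /string_hull /Bset_supp /bpt_pos /src1 /tgt1 /src2 /tgt2 /posx /posxb /=;
  (try match goal with |- context [odd ?j] => case: (odd j) end); rewrite /=;
  decide_bools; rewrite /=;
  (split; [lia | split; [move=> p | split | split | split | move=> m hm; rewrite !inE] | ]); lia.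

Lemma sites_succ n j a : 3 <= n -> a < (2 * n).-1 -> a != n.-1 ->
  let i := idx n j a.+1 in
  [/\ i < n,
      string_hull n (Bset_supp n j a) (Bset_supp n j a.+1)
        (src1 n i) (tgt1 n i) (src2 n i) (tgt2 n i) &
      (bpt_pos n j a = src1 n i /\ bpt_pos n j a.+1 = tgt1 n i) \/
      (bpt_pos n j a = src2 n i /\ bpt_pos n j a.+1 = tgt2 n i)].
Proof.
move=> hn ha hna; have [h0 h1 _ h3] := idx_succ j hn ha.
case: (a =P 0) => [a0|a_gt0].
  by rewrite /= h0 ?a0 //; hull_lia.
case: (a =P (2 * n).-2) => [aL|a_ltL].
  by rewrite /= h0 ?aL ?eqxx ?orbT //; hull_lia.
have [lo|up] : 0 < a < n.-1 \/ n <= a < (2 * n).-2 by lia.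
  by rewrite /= (h1 lo); hull_lia.
have [k ek] : exists k, 2 * n - a.+1 = k.+1 by exists (2 * n - a.+2); lia.
by rewrite /= (h3 up) ek; hull_lia.
Qed.

Lemma sites_n n j : 3 <= n ->
  [/\ idx n j n.-1.+1 = n, string_hullN n (Bset_supp n j n.-1) (Bset_supp n j n.-1.+1),
      bpt_pos n j n.-1 = n.-1 & bpt_pos n j n.-1.+1 = n.+1].
Proof.
move=> hn; rewrite /idx /epsj /string_hullN /Bset_supp /bpt_pos /=.
case: (odd j) => /=; decide_bools; rewrite /=;
  (split; [lia | split; [move=> p | split | | move=> m hm; rewrite !inE] | lia | lia]); lia.
Qed.

Lemma ground_single n l j : ground n l j = single n l (bpt_pos n j 0).
Proof.
apply: (@eq_from_nth _ 0) => [|m _].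
  by rewrite size_single /bpt_pos /ground /=;
    case: ifP; rewrite /= ?size_rcons ?size_nseq //; lia.
rewrite nth_single /bpt_pos /ground; case: ifP => _.
  by rewrite nth_rcons size_nseq nth_nseq if_same; case: ltngtP => //; lia.
by case: m => [|m] //=; rewrite nth_nseq if_same.
Qed.

Lemma single_char n l p (A : pred nat) c : p <= 2 * n -> p != n ->
  (forall q, A q = (q == p)) -> inB n l c /\ supp_in c A <-> c = single n l p.
Proof.
move=> hp hpn hA; split => [[hc hcA]|->]; last first.
  by split; [exact: inB_single | move=> m _; rewrite hA nth_single => /negbTE ->].
have hc0 q : q != p -> nth 0 c q = 0 by move=> hq; rewrite (supp_in_nth hcA) // hA.
have ec : c = single n (nth 0 c p) p.
  apply: (@eq_from_nth _ 0) => [|m _]; first by rewrite size_single // (inB_size hc).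
  by rewrite nth_single; case: eqP => [->|/eqP /hc0].
by case/and3P: hc => _ _; rewrite {1}ec sumn_single // => /eqP <-.
Qed.

Lemma Bset_char n l j a : 3 <= n -> a <= (2 * n).-1 ->
  forall c, Bset n l j a c <-> inB n l c /\ supp_in c (Bset_supp n j a).
Proof.
move=> hn; elim: a => [|a IH] ha.
  move=> c; rewrite /= ground_single; symmetry; apply: single_char => [|| q];
    rewrite /bpt_pos /Bset_supp /=; case: (odd j) => /=; lia.
have {}IH := IH (ltnW ha).
have [ea|hna] := eqVneq a n.-1.
  rewrite ea in IH *; have [hi hull _ _] := sites_n j hn.
  exact: Bset_succ_n hn hi hull IH.
have [hi hull _] := sites_succ j hn ha hna.
exact: Bset_succ_lt hn erefl hi hull IH.
Qed.

Lemma phi_eps_single_src n l i p : 3 <= n -> i < n -> (p = src1 n i \/ p = src2 n i) ->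
  phi n i (single n l p) = l /\ eps n i (single n l p) = 0.
Proof.
move=> hn hi hp; have [[? ? ? ? ?] ? _ _] := sites_ok_lt hn hi.
by rewrite phi_lt // eps_lt // !nth_single; case: hp => ->; simpl_eqn; lia.
Qed.

Lemma phi_eps_single_n n l : 3 <= n ->
  phi n n (single n l n.-1) = 2 * l /\ eps n n (single n l n.-1) = 0.
Proof.
move=> hn; rewrite /phi /eps ifF ?ltnn; last lia.
by rewrite /cx /cxb /cx0 /posx /posxb /posx0 !nth_single; decide_bools; rewrite /=; lia.
Qed.

Lemma bpt_single n l j a : 3 <= n -> a <= (2 * n).-1 ->
  bpt n l j a = Some (single n l (bpt_pos n j a)).
Proof.
move=> hn; elim: a => [|a IH] ha; first by rewrite /= ground_single.
rewrite /= IH /=; last lia.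
have [->|hna] := eqVneq a n.-1.
  have [-> _ -> ->] := sites_n j hn; have [-> _] := phi_eps_single_n l hn.
  by rewrite (ftil_iter_n hn) ?inB_single ?transfer_single ?nth_single ?eqxx //;
    decide_bools; rewrite /=; lia.
have [hi _ hpos] := sites_succ j hn ha hna.
have hs := sites_ok_lt hn hi; have hf := fun c => @ftil_lt n l _ c hn hi.
have [[? ? ? ? ?] ? [? ? ? ?] [? ? ? ?]] := hs.
case: hpos => [[-> ->]|[-> ->]].
  have [-> _] := phi_eps_single_src l hn hi (or_introl erefl).
  by rewrite (ftil_iter_src1 hs hf) ?inB_single ?transfer_single ?nth_single //; simpl_eqn; lia.
have [-> _] := phi_eps_single_src l hn hi (or_intror erefl).
by rewrite (ftil_iter_src2 hs hf) ?inB_single ?transfer_single ?nth_single //; simpl_eqn; lia.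
Qed.

Lemma lam_idx n l j a : 3 <= n -> 1 <= a <= (2 * n).-1 -> lam l j (idx n j a) = 0.
Proof.
move=> hn ha; rewrite /lam ifF //; apply/eqP.
by rewrite /idx /epsj /=; repeat case: ifP => ?; lia.
Qed.

Lemma phi_eps_bpt_pos n l j a : 3 <= n -> 1 <= l -> a < (2 * n).-1 ->
  eps n (idx n j a.+1) (single n l (bpt_pos n j a)) = 0 /\
  0 < phi n (idx n j a.+1) (single n l (bpt_pos n j a)).
Proof.
move=> hn hl ha; have [ea|hna] := eqVneq a n.-1.
  rewrite ea; have [-> _ -> _] := sites_n j hn; have [-> ->] := phi_eps_single_n l hn.
  by split => //; lia.
have [hi _ hpos] := sites_succ j hn ha hna.
have hp : bpt_pos n j a = src1 n (idx n j a.+1) \/ bpt_pos n j a = src2 n (idx n j a.+1).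
  by case: hpos => -[-> _]; [left | right].
by have [-> ->] := phi_eps_single_src l hn hi hp.
Qed.

Lemma bpt_pos_last n j : 0 < n -> bpt_pos n j (2 * n).-1 = bpt_pos n j.+1 0.
Proof. by move=> hn; rewrite /bpt_pos /= ifF ?eqxx; [case: (odd j) | lia]. Qed.

Lemma supp_in_ext c (A B : pred nat) : A =1 B -> supp_in c A <-> supp_in c B.
Proof. by move=> h; split => H p hp; [rewrite -h | rewrite h]; apply: H. Qed.

Lemma has_posx s k p : 1 <= s ->
  has (fun i => p == posx i) (iota s k) = (s.-1 <= p < s.-1 + k).
Proof.
move=> hs; apply/hasP/idP => [[x]|h]; first by rewrite mem_iota /posx => hx /eqP ->; lia.
by exists p.+1; rewrite ?mem_iota /posx //; lia.
Qed.

Lemma has_posxb n s k p : 1 <= s -> s + k <= (2 * n).+1 ->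
  has (fun i => p == posxb n i) (iota s k) =
    (0 < k) && ((2 * n).+2 - s - k <= p <= (2 * n).+1 - s).
Proof.
move=> hs hk; apply/hasP/idP => [[x]|h]; first by rewrite mem_iota /posxb => hx /eqP ->; lia.
by exists ((2 * n).+1 - p); rewrite ?mem_iota /posxb; [lia | apply/eqP; lia].
Qed.

Lemma allowedA_Bset_supp n j a : 3 <= n -> 1 <= a <= n.-1 -> allowedA n j a =1 Bset_supp n j a.
Proof.
move=> hn ha p; rewrite /allowedA /Bset_supp !has_posx // /posxb.
by case: (odd j) => /=; decide_bools; rewrite /=; lia.
Qed.

Lemma allowedB_Bset_supp n j a : 3 <= n -> 1 <= a <= n.-1 ->
  allowedB n j a =1 Bset_supp n j (n + a).-1.
Proof.
move=> hn ha p; rewrite /allowedB /Bset_supp !has_posx // has_posxb //; last lia.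
by rewrite /posx0 /posxb; case: (odd j) => /=; decide_bools; rewrite /=; lia.
Qed.

Unset Implicit Arguments. Set Strict Implicit.

Theorem mainTheorem4 (n l : nat) (hn : 3 <= n) (hl : 1 <= l) :
  let d := (2 * n).-1 in
  (* (II) *)
  (forall j, 1 <= j -> forall c, Bset n l j d c <-> inB n l c) /\
  (* (III) *)
  (forall j a b, 1 <= j -> 1 <= a <= d -> Bset n l j a.-1 b ->
     lam l j (idx n j a) <= eps n (idx n j a) b) /\
  (* (IV') *)
  (forall j a, 1 <= j -> 1 <= a <= d ->
     let i' := if a == d then idx n j.+1 1 else idx n j a.+1 in
     exists b, bpt n l j a = Some b /\ eps n i' b = 0 /\ 0 < phi n i' b) /\
  (forall j, 1 <= j ->
     Some (ground n l j.+1) =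
       ftil_iter n l (idx n j.+1 1) (lam l j.+1 (idx n j.+1 1)) (bpt n l j d)) /\
  (* explicit description of the sets B^{(j)}_a *)
  (forall j, 1 <= j ->
     (forall c, Bset n l j 0 c <-> c = ground n l j) /\
     (forall c, Bset n l j (2 * n).-1 c <-> inB n l c) /\
     (forall a, 1 <= a <= n.-1 -> forall c,
        Bset n l j a c <-> inB n l c /\ supp_in c (allowedA n j a)) /\
     (forall a, 1 <= a <= n.-1 -> forall c,
        Bset n l j (n + a).-1 c <-> inB n l c /\ supp_in c (allowedB n j a))) /\
  (* explicit description of the elements b^{(j)}_a *)
  (forall j, 1 <= j ->
     bpt n l j 0 = Some (ground n l j) /\
     bpt n l j (2 * n).-1 = Some (ground n l j.+1) /\
     (forall a, 1 <= a <= n.-1 ->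
        bpt n l j a = Some (single n l (posx a.+1)) /\
        bpt n l j (n + a).-1 = Some (single n l (posxb n (n - a).+1)))).
Proof.
cbv zeta.
have Bchar j a := @Bset_char n l j a hn.
have bptE j a := @bpt_single n l j a hn.
have BsetT j c : Bset n l j (2 * n).-1 c <-> inB n l c.
  by rewrite Bchar // /Bset_supp eqxx; split => [[]|hc] //; split => // m.
have bpt_last j : bpt n l j (2 * n).-1 = Some (ground n l j.+1).
  by rewrite bptE // bpt_pos_last ?ground_single //; lia.
split; first by move=> j _; apply: BsetT.
split; first by move=> j a b _ ha _; rewrite lam_idx.
split.
  move=> j a _ ha; rewrite bptE; last lia.
  eexists; split; first reflexivity.
  case: eqP => [ea|na]; last by apply: phi_eps_bpt_pos; lia.
  by rewrite ea bpt_pos_last; [apply: (@phi_eps_bpt_pos n l j.+1 0 hn hl); lia | lia].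
split; first by move=> j _; rewrite bpt_last lam_idx //; lia.
split.
  move=> j _; split => //; split; first exact: BsetT.
  split=> a ha c; rewrite Bchar; try lia.
    by rewrite (supp_in_ext c (allowedA_Bset_supp j hn ha)).
  by rewrite (supp_in_ext c (allowedB_Bset_supp j hn ha)).
move=> j _; split => //; split; first exact: bpt_last.
move=> a ha; rewrite !bptE; try lia.
by split; congr (Some (single _ _ _)); rewrite /bpt_pos /posx /posxb; decide_bools; lia.
Qed.
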